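(* Let $\mathbf P=(P,\leq,{}',0,1)$ be an orthocomplete atomic orthomodular poset. The following are equivalent: (i) $\mathbf P$ is pseudo-orthomodular; (ii) $\mathbf P$ is a complete orthomodular lattice; (iii) the Dedekind-MacNeille completion $\mathrm{DM}(\mathbf P)$ is orthomodular.
   Context: For $M\subseteq P$, $U(M)$, $L(M)$ are the sets of upper and lower bounds; $U(a,b)=U(\{a,b\})$ etc. A poset with complementation is a bounded poset with antitone involution $'$ ($x\le y\Rightarrow y'\le x'$, $x''=x$) with $L(x,x')=\{0\}$, $U(x,x')=\{1\}$. It is orthomodular if for all $x\le y'$ the join $x\vee y$ exists, and $((x\vee y)\wedge y')\vee y= x\vee y$ whenever the expressions are defined (with $x\wedge y=(x'\vee y')'$). It is pseudo-orthomodular if $L(U(L(x,y),y'),y)=L(x,y)$ for all $x,y$. A subset $S$ is orthogonal if $s\le t'$ for all distinct $s,t\in S$; $\mathbf P$ is orthocomplete if every orthogonal subset has a join in $\mathbf P$. An atom is a minimal element of $P\setminus\{0\}$; $\mathbf P$ is atomic if every $b>0$ lies above some atom. The Dedekind-MacNeille completion $\mathrm{DM}(\mathbf P)$ is the complete lattice of subsets $B$ with $L(U(B))=B$ under inclusion, with involution $X'=L(\{u'\mid u\in X\})$; a lattice with complementation is orthomodular if $x\vee y=((x\vee y)\wedge y')\vee y$. *)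

Record CPoset := {
  car :> Type;
  le : car -> car -> Prop;
  cmpl : car -> car;
  zero : car;
  one : car;
  le_refl : forall x, le x x;
  le_antisym : forall x y, le x y -> le y x -> x = y;
  le_trans : forall x y z, le x y -> le y z -> le x z;
  le0 : forall x, le zero x;
  le1 : forall x, le x one;
  cmpl_antitone : forall x y, le x y -> le (cmpl y) (cmpl x);
  cmpl_invol : forall x, cmpl (cmpl x) = x;
  cmpl_L : forall x z, le z x -> le z (cmpl x) -> z = zero;
  cmpl_U : forall x z, le x z -> le (cmpl x) z -> z = one
}.

Section Defs.
Variable P : CPoset.

Definition pset := P -> Prop.
Definition set_eq (A B : pset) : Prop := forall z, A z <-> B z.
Definition pair (x y : P) : pset := fun z => z = x \/ z = y.
Definition setU (A B : pset) : pset := fun z => A z \/ B z.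
Definition setI (A B : pset) : pset := fun z => A z /\ B z.
Definition set1 (x : P) : pset := fun z => z = x.

Definition Ub (M : pset) : pset := fun u => forall x, M x -> le P x u.
Definition Lb (M : pset) : pset := fun l => forall x, M x -> le P l x.

Definition is_sup (M : pset) (s : P) : Prop :=
  Ub M s /\ forall u, Ub M u -> le P s u.
Definition is_join (x y j : P) : Prop := is_sup (pair x y) j.

(** orthomodular poset: for x <= y' the join x \/ y exists, and
    ((x \/ y) /\ y') \/ y = x \/ y whenever defined, where a /\ b = (a' \/ b')'. *)
Definition orthomodular_poset : Prop :=
  (forall x y : P, le P x (cmpl P y) -> exists j, is_join x y j) /\
  (forall x y j m k : P, le P x (cmpl P y) ->
     is_join x y j ->
     is_join (cmpl P j) (cmpl P (cmpl P y)) m -> (* (cmpl m) = j /\ y' *)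
     is_join (cmpl P m) y k ->
     k = j).

Definition pseudo_orthomodular : Prop :=
  forall x y : P,
    set_eq (Lb (setU (Ub (setU (Lb (pair x y)) (set1 (cmpl P y)))) (set1 y)))
           (Lb (pair x y)).

Definition orthogonal (S : pset) : Prop :=
  forall s t, S s -> S t -> s <> t -> le P s (cmpl P t).

Definition orthocomplete : Prop :=
  forall S : pset, orthogonal S -> exists s, is_sup S s.

Definition atom (a : P) : Prop :=
  a <> zero P /\ forall b, le P b a -> b <> zero P -> b = a.

Definition atomic : Prop :=
  forall b : P, b <> zero P -> exists a, atom a /\ le P a b.

Definition complete_lattice : Prop := forall M : pset, exists s, is_sup M s.

Definition orthomodular_lattice_law : Prop :=
  forall x y j m k : P,
    is_join x y j ->
    is_join (cmpl P j) (cmpl P (cmpl P y)) m ->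
    is_join (cmpl P m) y k ->
    k = j.

Definition complete_orthomodular_lattice : Prop :=
  complete_lattice /\ orthomodular_lattice_law.

(** Dedekind-MacNeille completion: subsets B with L(U(B)) = B, ordered by
    inclusion; join of X, Y is L(U(X u Y)), meet is intersection,
    complement X' = L({u' | u in X}). *)
Definition dm_elem (B : pset) : Prop := set_eq (Lb (Ub B)) B.
Definition dm_join (X Y : pset) : pset := Lb (Ub (setU X Y)).
Definition dm_meet (X Y : pset) : pset := setI X Y.
Definition dm_cmpl (X : pset) : pset :=
  Lb (fun v => exists u, X u /\ v = cmpl P u).

Definition dm_orthomodular : Prop :=
  forall X Y : pset, dm_elem X -> dm_elem Y ->
    set_eq (dm_join X Y) (dm_join (dm_meet (dm_join X Y) (dm_cmpl Y)) Y).

End Defs.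

From Stdlib Require Import Classical.
From mathcomp Require classical_sets.

(* Completeness: take the Dedekind-MacNeille cut X = L(U(M)) of a subset M.
   By Zorn, X contains a maximal orthogonal set A of atoms; its join s lies in
   X, and by atomicity and maximality no nonzero element of X lies below s'.
   Either pseudo-orthomodularity or the orthomodularity of DM(P) turns this
   into X = L(s), so s is the join of M.  The orthomodular law for j = x \/ y
   is the instance of (iii) at L(x), L(y) and of (i) at j', y'.  Conversely,
   in a complete orthomodular lattice every set L(U(..)) occurring in (i) and
   (iii) is principal, so both identities reduce to the orthomodular law. *)

Local Notation "x ≤ y" := (le _ x y) (at level 70).
Local Notation "x ^⊥" := (cmpl _ x) (at level 2, left associativity, format "x ^⊥").

Section Complementation.
Variable P : CPoset.

Lemma cmpl_le_cmpl (x y : P) : x^⊥ ≤ y^⊥ -> y ≤ x.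
Proof.
  intro H. apply cmpl_antitone in H. rewrite !cmpl_invol in H. exact H.
Qed.

Lemma le_cmpl_sym (x y : P) : x ≤ y^⊥ -> y ≤ x^⊥.
Proof.
  intro H. apply cmpl_le_cmpl. rewrite cmpl_invol. exact H.
Qed.

Lemma cmpl_le_sym (x y : P) : x^⊥ ≤ y -> y^⊥ ≤ x.
Proof.
  intro H. apply cmpl_le_cmpl. rewrite cmpl_invol. exact H.
Qed.

Lemma cmpl_zero : (zero P)^⊥ = one P.
Proof. apply (cmpl_U P (zero P)); [apply le0 | apply le_refl]. Qed.

Lemma cmpl_eq_zero (x : P) : x^⊥ = zero P -> x = one P.
Proof. intro H. rewrite <- (cmpl_invol P x), H. exact cmpl_zero. Qed.

End Complementation.

Section Cuts.
Variable P : CPoset.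

Definition down (s : P) : pset P := fun z => z ≤ s.
Definition cut (M : pset P) : pset P := Lb P (Ub P M).

Definition down_closed (X : pset P) : Prop :=
  forall z w, X w -> z ≤ w -> X z.

Definition perp_trivial (X : pset P) (s : P) : Prop :=
  forall z, X z -> z ≤ s^⊥ -> z = zero P.

Lemma cut_down_closed (M : pset P) : down_closed (cut M).
Proof. intros z w Hw zw u Hu. apply (le_trans P _ w); auto. Qed.

Lemma cut_sup_closed (M S : pset P) (s : P) :
  (forall a, S a -> cut M a) -> is_sup P S s -> cut M s.
Proof. intros SM [_ sL] u Hu. apply sL. intros a Sa. exact (SM a Sa u Hu). Qed.

Lemma cut_is_sup (M : pset P) (s : P) :
  cut M s -> (forall z, cut M z -> z ≤ s) -> is_sup P M s.
Proof.
  intros Ms sU. split.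
  - intros x Mx. apply sU. intros u Hu. exact (Hu x Mx).
  - intros u Hu. exact (Ms u Hu).
Qed.

Lemma dm_elem_cut (M : pset P) : dm_elem P (cut M).
Proof.
  intro z. split.
  - intros Hz u Hu. apply Hz. intros x Mx. exact (Mx u Hu).
  - intros Hz u Hu. exact (Hu z Hz).
Qed.

Lemma dm_elem_down (s : P) : dm_elem P (down s).
Proof.
  intro z. split.
  - intro Hz. apply Hz. intros x Hx. exact Hx.
  - intros Hz u Hu. exact (Hu z Hz).
Qed.

End Cuts.

Section Orthocomplete.
Variable P : CPoset.

Definition orthogonal_atoms_in (X A : pset P) : Prop :=
  orthogonal P A /\ forall a, A a -> atom P a /\ X a.

Lemma maximal_orthogonal_atoms (X : pset P) :
  exists A, orthogonal_atoms_in X A /\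
    forall B, (forall a, A a -> B a) -> orthogonal_atoms_in X B ->
      forall a, B a -> A a.
Proof.
  destruct (@classical_sets.Zorn_bigcup _ (orthogonal_atoms_in X)) as [A [HA Amax]].
  - intros F FX Ftot. split.
    + intros s t [A1 F1 s1] [A2 F2 t2] st.
      destruct (Ftot A1 A2 F1 F2) as [A12 | A21].
      * apply (proj1 (FX A2 F2)); auto.
      * apply (proj1 (FX A1 F1)); auto.
    + intros a [A1 F1 a1]. exact (proj2 (FX A1 F1) a a1).
  - exists A. split; [exact HA |].
    intros B AB HB a Ba. apply NNPP. intro nAa.
    apply (Amax B); [split; [exact AB | intro BA; exact (nAa (BA a Ba))] | exact HB].
Qed.

Lemma orthogonal_setU1 (A : pset P) (s a : P) :
  orthogonal P A -> Ub P A s -> a ≤ s^⊥ -> orthogonal P (setU P A (set1 P a)).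
Proof.
  intros Aorth sU as' u v [Au | ->] [Av | ->] uv.
  - exact (Aorth u v Au Av uv).
  - apply (le_trans P _ s); [exact (sU u Au) | exact (le_cmpl_sym P _ _ as')].
  - apply (le_trans P _ s^⊥); [exact as' | exact (cmpl_antitone P _ _ (sU v Av))].
  - contradiction.
Qed.

Hypotheses (OC : orthocomplete P) (AT : atomic P).

Lemma exists_perp_trivial (X : pset P) :
  down_closed P X ->
  (forall S s, orthogonal P S -> (forall a, S a -> X a) -> is_sup P S s -> X s) ->
  exists s, X s /\ perp_trivial P X s.
Proof.
  intros Xdown Xsup.
  destruct (maximal_orthogonal_atoms X) as [A [[Aorth AX] Amax]].
  destruct (OC A Aorth) as [s [sU sL]].
  exists s. split.
  - apply (Xsup A s Aorth); [intros a Aa; exact (proj2 (AX a Aa)) | split; assumption].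
  - intros z Xz zs. apply NNPP. intro nz.
    destruct (AT z nz) as [a [atom_a az]].
    assert (as' : a ≤ s^⊥) by exact (le_trans P _ _ _ az zs).
    assert (Aa : A a).
    { apply (Amax (setU P A (set1 P a))); [intros b Ab; left; exact Ab | | right; reflexivity].
      split; [exact (orthogonal_setU1 A s a Aorth sU as') |].
      intros b [Ab | ->]; [exact (AX b Ab) | split; [exact atom_a | exact (Xdown a z Xz az)]]. }
    apply (proj1 atom_a). exact (cmpl_L P s a (sU a Aa) as').
Qed.

Lemma complete_lattice_of_perp_trivial_cut :
  (forall M s, cut P M s -> perp_trivial P (cut P M) s ->
     forall z, cut P M z -> z ≤ s) ->
  complete_lattice P.
Proof.
  intros H M.
  destruct (exists_perp_trivial (cut P M)) as [s [Ms Hs]].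
  - apply cut_down_closed.
  - intros S s _. apply cut_sup_closed.
  - exists s. exact (cut_is_sup P M s Ms (H M s Ms Hs)).
Qed.

End Orthocomplete.

Section OrthomodularLaw.
Variable P : CPoset.

Lemma is_sup_down (x : P) : is_sup P (down P x) x.
Proof. split; [intros z Hz; exact Hz | intros u Hu; exact (Hu x (le_refl P x))]. Qed.

Lemma join_meet_cmpl_join_le (x y j m k : P) :
  is_join P x y j -> is_join P j^⊥ y^⊥^⊥ m -> is_join P m^⊥ y k -> k ≤ j.
Proof.
  intros [jU _] [mU _] [_ kL]. apply kL. intros w [-> | ->].
  - apply cmpl_le_sym. apply mU. left. reflexivity.
  - apply jU. right. reflexivity.
Qed.

Lemma dm_join_iff (X Y : pset P) (x y j z : P) :
  is_sup P X x -> is_sup P Y y -> is_join P x y j -> dm_join P X Y z <-> z ≤ j.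
Proof.
  intros [xU xL] [yU yL] [jU jL]. split.
  - intro Hz. apply Hz. intros v [Xv | Yv].
    + apply (le_trans P _ x); [exact (xU v Xv) | apply jU; left; reflexivity].
    + apply (le_trans P _ y); [exact (yU v Yv) | apply jU; right; reflexivity].
  - intros zj u Hu. apply (le_trans P _ j); [exact zj |]. apply jL. intros v [-> | ->].
    + apply xL. intros w Xw. apply Hu. left. exact Xw.
    + apply yL. intros w Yw. apply Hu. right. exact Yw.
Qed.

Lemma dm_cmpl_iff (Y : pset P) (y w : P) :
  is_sup P Y y -> dm_cmpl P Y w <-> w ≤ y^⊥.
Proof.
  intros [yU yL]. split.
  - intro Hw. apply le_cmpl_sym. apply yL. intros u Yu.
    apply le_cmpl_sym. apply Hw. exists u. split; [exact Yu | reflexivity].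
  - intros wy v [u [Yu ->]]. apply (le_trans P _ y^⊥); [exact wy |].
    exact (cmpl_antitone P _ _ (yU u Yu)).
Qed.

Lemma is_sup_dm_meet_cmpl (X Y : pset P) (x y j m : P) :
  is_sup P X x -> is_sup P Y y -> is_join P x y j -> is_join P j^⊥ y^⊥^⊥ m ->
  is_sup P (dm_meet P (dm_join P X Y) (dm_cmpl P Y)) m^⊥.
Proof.
  intros Xx Yy Jj [mU mL]. split.
  - intros w [Jw Cw]. apply le_cmpl_sym. apply mL. intros v [-> | ->].
    + exact (cmpl_antitone P _ _ (proj1 (dm_join_iff X Y x y j w Xx Yy Jj) Jw)).
    + exact (cmpl_antitone P _ _ (proj1 (dm_cmpl_iff Y y w Yy) Cw)).
  - intros u Hu. apply Hu. split.
    + apply (dm_join_iff X Y x y j _ Xx Yy Jj). apply cmpl_le_sym. apply mU. left. reflexivity.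
    + apply (dm_cmpl_iff Y y _ Yy). apply cmpl_antitone. rewrite <- (cmpl_invol P y) at 1.
      apply mU. right. reflexivity.
Qed.

Lemma dm_join_meet_cmpl_join_iff (X Y : pset P) (x y j m k z : P) :
  is_sup P X x -> is_sup P Y y -> is_join P x y j ->
  is_join P j^⊥ y^⊥^⊥ m -> is_join P m^⊥ y k ->
  dm_join P (dm_meet P (dm_join P X Y) (dm_cmpl P Y)) Y z <-> z ≤ k.
Proof.
  intros Xx Yy Jj Jm Jk.
  exact (dm_join_iff _ Y _ y k z (is_sup_dm_meet_cmpl X Y x y j m Xx Yy Jj Jm) Yy Jk).
Qed.

Lemma orthomodular_law_of_dm : dm_orthomodular P -> orthomodular_lattice_law P.
Proof.
  intros DM x y j m k Jj Jm Jk.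
  apply le_antisym; [exact (join_meet_cmpl_join_le x y j m k Jj Jm Jk) |].
  pose proof (is_sup_down x) as Xx. pose proof (is_sup_down y) as Yy.
  apply (proj1 (dm_join_meet_cmpl_join_iff _ _ x y j m k j Xx Yy Jj Jm Jk)).
  apply (proj1 (DM _ _ (dm_elem_down P x) (dm_elem_down P y) j)).
  apply (proj2 (dm_join_iff _ _ x y j j Xx Yy Jj)). apply le_refl.
Qed.

Lemma dm_orthomodular_of_complete_orthomodular :
  complete_orthomodular_lattice P -> dm_orthomodular P.
Proof.
  intros [C LAW] X Y _ _ z.
  destruct (C X) as [x Xx]. destruct (C Y) as [y Yy].
  destruct (C (pair P x y)) as [j Jj].
  destruct (C (pair P j^⊥ y^⊥^⊥)) as [m Jm].
  destruct (C (pair P m^⊥ y)) as [k Jk].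
  rewrite (dm_join_iff X Y x y j z Xx Yy Jj).
  rewrite (dm_join_meet_cmpl_join_iff X Y x y j m k z Xx Yy Jj Jm Jk).
  rewrite (LAW x y j m k Jj Jm Jk). reflexivity.
Qed.

Lemma orthomodular_law_of_pseudo_orthomodular :
  pseudo_orthomodular P -> orthomodular_lattice_law P.
Proof.
  intros POM x y j m k Jj Jm Jk.
  apply le_antisym; [exact (join_meet_cmpl_join_le x y j m k Jj Jm Jk) |].
  destruct Jj as [jU _]. destruct Jm as [_ mL]. destruct Jk as [kU _].
  apply cmpl_le_cmpl.
  assert (Hk : Lb P (pair P j^⊥ y^⊥) k^⊥).
  { apply (POM j^⊥ y^⊥). intros w [Hw | ->].
    - apply (le_trans P _ m).
      + apply cmpl_le_sym. apply kU. left. reflexivity.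
      + apply mL. intros v [-> | ->].
        * apply Hw. left. intros v [-> | ->]; [apply le_refl |].
          apply cmpl_antitone. apply jU. right. reflexivity.
        * apply Hw. right. reflexivity.
    - apply cmpl_antitone. apply kU. right. reflexivity. }
  apply Hk. left. reflexivity.
Qed.

Lemma orthomodular_join_cmpl_meet_le (C : complete_lattice P)
    (LAW : orthomodular_lattice_law P) (a y b z : P) :
  a ≤ y -> is_join P a y^⊥ b -> z ≤ b -> z ≤ y -> z ≤ a.
Proof.
  intros ay Jb zb zy.
  destruct (C (pair P b^⊥ y^⊥)) as [k Jk].
  assert (Ja : is_join P a^⊥ y^⊥ a^⊥).
  { split.
    - intros v [-> | ->]; [apply le_refl | exact (cmpl_antitone P _ _ ay)].
    - intros u Hu. apply Hu. left. reflexivity. }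
  assert (Jb' : is_join P a^⊥^⊥ y^⊥^⊥^⊥ b) by (rewrite !cmpl_invol; exact Jb).
  pose proof (LAW _ _ _ _ _ Ja Jb' Jk) as ka. subst k.
  apply cmpl_le_cmpl. destruct Jk as [_ kL]. apply kL. intros v [-> | ->].
  - exact (cmpl_antitone P _ _ zb).
  - exact (cmpl_antitone P _ _ zy).
Qed.

Lemma pseudo_orthomodular_of_complete_orthomodular :
  complete_orthomodular_lattice P -> pseudo_orthomodular P.
Proof.
  intros [C LAW] x y z. split.
  - intro Hz.
    destruct (C (Lb P (pair P x y))) as [a [aU aL]].
    assert (ay : a ≤ y) by (apply aL; intros v Hv; apply Hv; right; reflexivity).
    destruct (C (pair P a y^⊥)) as [b Jb].
    assert (za : z ≤ a).
    { apply (orthomodular_join_cmpl_meet_le C LAW a y b z ay Jb).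
      - destruct Jb as [bU _]. apply Hz. left. intros v [Lv | ->].
        + apply (le_trans P _ a); [exact (aU v Lv) | apply bU; left; reflexivity].
        + apply bU. right. reflexivity.
      - apply Hz. right. reflexivity. }
    intros v Hv. apply (le_trans P _ a); [exact za |]. apply aL.
    intros w Lw. exact (Lw v Hv).
  - intros Hz v [Hv | ->].
    + apply Hv. left. exact Hz.
    + apply Hz. right. reflexivity.
Qed.

End OrthomodularLaw.

Section CutBounds.
Variable P : CPoset.

Lemma pseudo_orthomodular_cut_le (POM : pseudo_orthomodular P) (M : pset P) (s : P) :
  cut P M s -> perp_trivial P (cut P M) s -> forall z, cut P M z -> z ≤ s.
Proof.
  intros Ms Hs z Mz. apply cmpl_le_cmpl.
  assert (Hl : Lb P (pair P z^⊥ s^⊥) s^⊥).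
  { apply (POM z^⊥ s^⊥). intros w [Hw | ->]; [| apply le_refl].
    (* w' is a lower bound of U(M) lying below s', hence w' = 0 *)
    replace w with (one P); [apply le1 | symmetry; apply cmpl_eq_zero].
    apply Hs.
    - intros u Hu. apply cmpl_le_sym. apply Hw. left.
      intros v [-> | ->]; apply cmpl_antitone; [exact (Mz u Hu) | exact (Ms u Hu)].
    - apply cmpl_le_sym. apply Hw. right. reflexivity. }
  apply Hl. left. reflexivity.
Qed.

Lemma dm_orthomodular_cut_le (DM : dm_orthomodular P) (M : pset P) (s : P) :
  cut P M s -> perp_trivial P (cut P M) s -> forall z, cut P M z -> z ≤ s.
Proof.
  intros Ms Hs z Mz.
  assert (Jz : dm_join P (cut P M) (down P s) z).
  { intros u Hu. apply Hu. left. exact Mz. }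
  apply (proj1 (DM _ _ (dm_elem_cut P M) (dm_elem_down P s) z) Jz).
  intros w [[Jw Cw] | ws]; [| exact ws].
  replace w with (zero P); [apply le0 | symmetry].
  apply Hs.
  - intros u Hu. apply Jw. intros v [Mv | vs]; [exact (Mv u Hu) |].
    exact (le_trans P _ _ _ vs (Ms u Hu)).
  - exact (proj1 (dm_cmpl_iff P _ s w (is_sup_down P s)) Cw).
Qed.

End CutBounds.

Theorem theorem6 (P : CPoset) :
  orthomodular_poset P -> orthocomplete P -> atomic P ->
  (pseudo_orthomodular P <-> complete_orthomodular_lattice P) /\
  (complete_orthomodular_lattice P <-> dm_orthomodular P).
Proof.
  intros _ OC AT. split; split.
  - intro POM. split.
    + exact (complete_lattice_of_perp_trivial_cut P OC AT (pseudo_orthomodular_cut_le P POM)).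
    + exact (orthomodular_law_of_pseudo_orthomodular P POM).
  - exact (pseudo_orthomodular_of_complete_orthomodular P).
  - exact (dm_orthomodular_of_complete_orthomodular P).
  - intro DM. split.
    + exact (complete_lattice_of_perp_trivial_cut P OC AT (dm_orthomodular_cut_le P DM)).
    + exact (orthomodular_law_of_dm P DM).
Qed.
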